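(* In the 2-TBSG setting below, let $\widehat{\pi}=(\widehat{\pi}_1,\widehat{\pi}_2)$ be an $\epsilon_{\mathrm{PS}}$-optimal policy in $\widehat{\mathcal{G}}$. Then, componentwise, $$-\Big(\|Q^{\widehat{c}(\pi_2^* ),\pi_2^*}-\widehat{Q}^{\widehat{c}(\pi_2^* ),\pi_2^*}\|_\infty+\|Q^{\widehat{\pi}_1,\widehat{\pi}_2}-\widehat{Q}^{\widehat{\pi}_1,\widehat{\pi}_2}\|_\infty+\epsilon_{\mathrm{PS}}\Big)\mathbf{1}\le Q^*-Q^{\widehat{\pi}_1,\widehat{\pi}_2}$$ $$\le\Big(\|Q^{\pi_1^*,\widehat{c}(\pi_1^* )}-\widehat{Q}^{\pi_1^*,\widehat{c}(\pi_1^* )}\|_\infty+\|Q^{\widehat{\pi}_1,\widehat{\pi}_2}-\widehat{Q}^{\widehat{\pi}_1,\widehat{\pi}_2}\|_\infty+\epsilon_{\mathrm{PS}}\Big)\mathbf{1}.$$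
   Context: A 2-TBSG $\mathcal{G}=(\mathcal{S}_1,\mathcal{S}_2,\mathcal{A},P,r,\gamma)$: finite $\mathcal{S}=\mathcal{S}_1\sqcup\mathcal{S}_2$, finite $\mathcal{A}$, kernel $P$, reward $r\in[0,1]$, $\gamma\in(0,1)$; player 1 (maximizer) uses $\pi_1:\mathcal{S}_1\to\mathcal{A}$, player 2 (minimizer) uses $\pi_2:\mathcal{S}_2\to\mathcal{A}$; for $\pi=(\pi_1,\pi_2)$, $V^\pi(s)=\mathbb{E}[\sum_t\gamma^tr(s^t,\pi(s^t))|s^0=s]$, $Q^\pi(s,a)=r(s,a)+\gamma\sum_{s'}P(s'|s,a)V^\pi(s')$. Counter (best-response) policies: $c(\pi_2)$ is a player-1 policy with $V^{c(\pi_2),\pi_2}=\max_{\pi_1}V^{\pi_1,\pi_2}$ at every state; $c(\pi_1)$ is a player-2 policy with $V^{\pi_1,c(\pi_1)}=\min_{\pi_2}V^{\pi_1,\pi_2}$ at every state. $\pi^*=(\pi_1^*,\pi_2^* )$ is a Nash equilibrium of $\mathcal{G}$ ($\pi_1^*=c(\pi_2^* )$, $\pi_2^*=c(\pi_1^* )$) and $Q^*=Q^{\pi^*}$. $P$ has linear representation $P(s'|s,a)=\sum_k\phi_k(s,a)\psi_k(s')$ satisfying the anchor-state assumption (anchors $(s_k,a_k)$, $\lambda_k^{s,a}\ge0$, $\sum_k\lambda_k^{s,a}=1$, $\phi(s,a)=\sum_k\lambda_k^{s,a}\phi(s_k,a_k)$); the empirical game $\widehat{\mathcal{G}}$ has kernel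 $\widehat{P}(s'|s,a)=\sum_k\lambda_k^{s,a}\widehat{P}_\mathcal{K}(s'|s_k,a_k)$, $\widehat{P}_\mathcal{K}(\cdot|s_k,a_k)$ the empirical distribution of $N$ samples from $P(\cdot|s_k,a_k)$. Hatted quantities ($\widehat{Q}^\pi$, $\widehat{Q}^*$, counter policies $\widehat{c}$) refer to $\widehat{\mathcal{G}}$. $\widehat{\pi}$ is $\epsilon_{\mathrm{PS}}$-optimal in $\widehat{\mathcal{G}}$ if $|\widehat{Q}^{\widehat{\pi}}-\widehat{Q}^*|\le\epsilon_{\mathrm{PS}}$ componentwise. $\mathbf{1}$ is the all-ones vector. *)

From HB Require Import structures.
From mathcomp Require Import all_boot all_order all_algebra.
From mathcomp Require Import all_classical all_reals all_analysis.
Set Implicit Arguments. Unset Strict Implicit. Unset Printing Implicit Defensive.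
Import Order.TTheory GRing.Theory Num.Theory.
Local Open Scope ring_scope.

Section TBSG.
Variables (R : realType) (S1 S2 A : finType).

Definition gstate := (S1 + S2)%type.

Definition gkernel := gstate -> A -> gstate -> R.

Definition is_kernel (P : gkernel) : Prop :=
  (forall s a s', 0 <= P s a s') /\ (forall s a, \sum_(s' : gstate) P s a s' = 1).

Definition joint (pi1 : S1 -> A) (pi2 : S2 -> A) : gstate -> A :=
  fun s => match s with inl s1 => pi1 s1 | inr s2 => pi2 s2 end.

(* Expected reward at time t: E[r(s^t, pi(s^t)) | s^0 = s]. *)
Fixpoint exp_rew (P : gkernel) (r : gstate -> A -> R) (pi : gstate -> A)
    (t : nat) (s : gstate) : R :=
  match t with
  | 0 => r s (pi s)
  | t'.+1 => \sum_(s' : gstate) P s (pi s) s' * exp_rew P r pi t' s'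
  end.

Definition Vf (P : gkernel) (r : gstate -> A -> R) (gamma : R)
    (pi : gstate -> A) (s : gstate) : R :=
  limn (fun n : nat => \sum_(0 <= t < n) gamma ^+ t * exp_rew P r pi t s).

Definition Qf (P : gkernel) (r : gstate -> A -> R) (gamma : R)
    (pi : gstate -> A) (s : gstate) (a : A) : R :=
  r s a + gamma * \sum_(s' : gstate) P s a s' * Vf P r gamma pi s'.

Definition is_counter1 (P : gkernel) (r : gstate -> A -> R) (gamma : R)
    (pi2 : S2 -> A) (c : S1 -> A) : Prop :=
  forall (pi1 : S1 -> A) (s : gstate),
    Vf P r gamma (joint pi1 pi2) s <= Vf P r gamma (joint c pi2) s.

Definition is_counter2 (P : gkernel) (r : gstate -> A -> R) (gamma : R)
    (pi1 : S1 -> A) (c : S2 -> A) : Prop :=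
  forall (pi2 : S2 -> A) (s : gstate),
    Vf P r gamma (joint pi1 c) s <= Vf P r gamma (joint pi1 pi2) s.

Definition is_Nash (P : gkernel) (r : gstate -> A -> R) (gamma : R)
    (pi1 : S1 -> A) (pi2 : S2 -> A) : Prop :=
  is_counter1 P r gamma pi2 pi1 /\ is_counter2 P r gamma pi1 pi2.

Definition supnorm (Q Q' : gstate -> A -> R) : R :=
  \big[Num.max/0]_(sa : (gstate * A)%type) `|Q sa.1 sa.2 - Q' sa.1 sa.2|.

Definition empirical (N : nat) (xs : 'I_N -> gstate) (s' : gstate) : R :=
  (#|[set j | xs j == s']|)%:R / N%:R.

End TBSG.

From HB Require Import structures.
From mathcomp Require Import all_boot all_order all_algebra.
From mathcomp Require Import all_classical all_reals all_analysis.
From mathcomp Require Import lra.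
Set Implicit Arguments. Unset Strict Implicit.
Import Order.TTheory GRing.Theory Num.Theory.
Local Open Scope ring_scope.

(* Since [Q^pi = r + gamma P V^pi] is monotone in [V^pi], the best-response
   inequalities defining counter policies and Nash equilibria hold for Q as
   well. Writing pi' for the true equilibrium, pih' for the empirical one and
   c for the empirical counter policy, the lower bound follows from the chain
   Q^pi' >= Q^(c, pi'_2) ~ Qh^(c, pi'_2) >= Qh^(pih'_1, pi'_2) >= Qh^pih'
   ~ Qh^pih ~ Q^pih, where the two approximations between true and empirical
   values cost the sup-norm errors and the one between the empirical values
   costs eps; the upper bound is symmetric. *)

Section CounterQ.
Variables (R : realType) (S1 S2 A : finType).
Variables (P : gkernel R S1 S2 A) (r : gstate S1 S2 -> A -> R) (gamma : R).
Hypothesis P_ge0 : forall s a s', 0 <= P s a s'.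
Hypothesis gamma_ge0 : 0 <= gamma.

Lemma Qf_le (pi pi' : gstate S1 S2 -> A) :
  (forall s, Vf P r gamma pi s <= Vf P r gamma pi' s) ->
  forall s a, Qf P r gamma pi s a <= Qf P r gamma pi' s a.
Proof.
move=> leV s a; rewrite /Qf lerD2l ler_wpM2l //.
by apply: ler_sum => s' _; rewrite ler_wpM2l.
Qed.

Lemma Qf_le_counter1 (pi2 : S2 -> A) (c : S1 -> A) :
  is_counter1 P r gamma pi2 c ->
  forall pi1 s a, Qf P r gamma (joint pi1 pi2) s a <= Qf P r gamma (joint c pi2) s a.
Proof. by move=> hc pi; apply: Qf_le => s; apply: hc. Qed.

Lemma Qf_counter2_le (pi1 : S1 -> A) (c : S2 -> A) :
  is_counter2 P r gamma pi1 c ->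
  forall pi2 s a, Qf P r gamma (joint pi1 c) s a <= Qf P r gamma (joint pi1 pi2) s a.
Proof. by move=> hc pi; apply: Qf_le => s; apply: hc. Qed.

End CounterQ.

Lemma ler_supnorm (R : realType) (S1 S2 A : finType)
    (Q Q' : gstate S1 S2 -> A -> R) s a :
  `|Q s a - Q' s a| <= supnorm Q Q'.
Proof.
exact: (le_bigmax 0
  (fun sa : (gstate S1 S2 * A)%type => `|Q sa.1 sa.2 - Q' sa.1 sa.2|) (s, a)).
Qed.

Lemma sub_ge_approx_chain (R : realDomainType) (q qc hqc hq hp p n1 n2 e : R) :
  qc <= q -> `|qc - hqc| <= n1 -> hq <= hqc -> `|hp - hq| <= e ->
  `|p - hp| <= n2 -> - (n1 + n2 + e) <= q - p.
Proof. by rewrite !ler_norml => *; lra. Qed.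

Lemma sub_le_approx_chain (R : realDomainType) (q qc hqc hq hp p n1 n2 e : R) :
  q <= qc -> `|qc - hqc| <= n1 -> hqc <= hq -> `|hp - hq| <= e ->
  `|p - hp| <= n2 -> q - p <= n1 + n2 + e.
Proof. by rewrite !ler_norml => *; lra. Qed.

Lemma empirical_ge0 (R : realType) (S1 S2 : finType) (N : nat)
    (xs : 'I_N -> gstate S1 S2) s' :
  0 <= empirical R xs s'.
Proof. by rewrite /empirical divr_ge0. Qed.

Theorem lemma26 (R : realType) (S1 S2 A : finType)
  (P : gkernel R S1 S2 A) (r : gstate S1 S2 -> A -> R) (gamma : R)
  (* K anchors, linear representation, anchor-gstate assumption *)
  (K : nat) (phi : gstate S1 S2 -> A -> 'I_K -> R) (psi : 'I_K -> gstate S1 S2 -> R)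
  (sk : 'I_K -> gstate S1 S2) (ak : 'I_K -> A)
  (lam : gstate S1 S2 -> A -> 'I_K -> R)
  (* empirical gkernel from N samples at each anchor *)
  (N : nat) (samples : 'I_K -> 'I_N -> gstate S1 S2)
  (Phat : gkernel R S1 S2 A)
  (* Nash equilibria of G and of the empirical game, counter policies, eps-optimal policy *)
  (pis1 : S1 -> A) (pis2 : S2 -> A)
  (pihs1 : S1 -> A) (pihs2 : S2 -> A)
  (ch1 : S1 -> A) (ch2 : S2 -> A)
  (pih1 : S1 -> A) (pih2 : S2 -> A)
  (eps : R) :
  is_kernel P ->
  (forall s a, 0 <= r s a <= 1) ->
  0 < gamma < 1 ->
  (forall s a s', P s a s' = \sum_(k < K) phi s a k * psi k s') ->
  (forall s a k, 0 <= lam s a k) ->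
  (forall s a, \sum_(k < K) lam s a k = 1) ->
  (forall s a j, phi s a j = \sum_(k < K) lam s a k * phi (sk k) (ak k) j) ->
  (0 < N)%N ->
  (forall s a s', Phat s a s' =
      \sum_(k < K) lam s a k * empirical R (samples k) s') ->
  is_Nash P r gamma pis1 pis2 ->
  is_Nash Phat r gamma pihs1 pihs2 ->
  is_counter1 Phat r gamma pis2 ch1 ->
  is_counter2 Phat r gamma pis1 ch2 ->
  (forall s a, `| Qf Phat r gamma (joint pih1 pih2) s a
                - Qf Phat r gamma (joint pihs1 pihs2) s a | <= eps) ->
  let Qpih := Qf P r gamma (joint pih1 pih2) in
  let Qhpih := Qf Phat r gamma (joint pih1 pih2) in
  let Qstar := Qf P r gamma (joint pis1 pis2) in
  forall s a,
    - (supnorm (Qf P r gamma (joint ch1 pis2)) (Qf Phat r gamma (joint ch1 pis2))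
       + supnorm Qpih Qhpih + eps)
      <= Qstar s a - Qpih s a
    /\
    Qstar s a - Qpih s a
      <= supnorm (Qf P r gamma (joint pis1 ch2)) (Qf Phat r gamma (joint pis1 ch2))
         + supnorm Qpih Qhpih + eps.
Proof.
move=> [P_ge0 _] _ /andP[/ltW gamma_ge0 _] _ lam_ge0 _ _ _ Phat_def
  [Nash1 Nash2] [Nashh1 Nashh2] ch1_counter ch2_counter eps_opt Qpih Qhpih Qstar s a.
have Phat_ge0 s0 a0 s' : 0 <= Phat s0 a0 s'.
  by rewrite Phat_def sumr_ge0 // => k _; rewrite mulr_ge0 ?empirical_ge0.
split.
- apply: (sub_ge_approx_chain (Qf_le_counter1 P_ge0 gamma_ge0 Nash1 ch1 s a)
    (ler_supnorm _ _ s a) _ (eps_opt s a) (ler_supnorm _ _ s a)).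
  apply: le_trans _ (Qf_le_counter1 Phat_ge0 gamma_ge0 ch1_counter pihs1 s a).
  exact: (Qf_counter2_le Phat_ge0 gamma_ge0 Nashh2 pis2 s a).
- apply: (sub_le_approx_chain (Qf_counter2_le P_ge0 gamma_ge0 Nash2 ch2 s a)
    (ler_supnorm _ _ s a) _ (eps_opt s a) (ler_supnorm _ _ s a)).
  apply: le_trans (Qf_counter2_le Phat_ge0 gamma_ge0 ch2_counter pihs2 s a) _.
  exact: (Qf_le_counter1 Phat_ge0 gamma_ge0 Nashh1 pis1 s a).
Qed.
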